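(* Let $d\ge1$, $0<h<1$ with $2k/h\notin\mathbb Z$ for $k=1,\dots,d-1$. The number of candidate saddles in dimension $d$ (configurations on $\mathbb Z^d$) whose plus sites are contained in a fixed $d$-dimensional cube of side length $l\ge\ell_d$ is $$\mathcal N_d(l)=2^{d-1}\,d!\,(l-\ell_d+1)^d\prod_{k=1}^{d-1}(\ell_{k+1}-\ell_k+1)^k .$$
   Context: $\ell_k:=\lceil 2(k-1)/h\rceil$. A $d$-dimensional quasi-cube with maximal side $\ell$ is a box in $\mathbb Z^d$ all of whose sides have length $\ell-1$ or $\ell$. Attachment: given a box $l_1\times\cdots\times l_d$ and a $(d-1)$-dimensional configuration $\eta$ on $l_2\times\cdots\times l_d$, the configuration in which all sites of the box are $+1$, the sites $(l_1+1,i_2,\dots,i_d)$ with $\eta(i_2,\dots,i_d)=+1$ are $+1$, and all other sites are $-1$ — and every rotation and translation of it — is said to have $\eta$ attached to the box. Candidate saddles are defined recursively: in dimension $1$, a single $+1$ site with all other sites $-1$; in dimension $d$, configurations whose plus sites form a quasi-cube with one side of length $\ell_d-1$ and all other sides of length $\ell_d$, with a $(d-1)$-dimensional candidate saddle attached on one of its $(d-1)$-dimensional faces of size $\ell_d^{\,d-1}$. *)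

From HB Require Import structures.
From mathcomp Require Import all_boot all_order all_algebra all_fingroup.
From mathcomp Require Import boolp reals.
Set Implicit Arguments. Unset Strict Implicit. Unset Printing Implicit Defensive.
Import Order.TTheory GRing.Theory Num.Theory.
Local Open Scope ring_scope.

(* Points of Z^d and (plus-)sets of sites of Z^d.  A configuration
   sigma : Z^d -> {-1,+1} is identified with its set of plus sites. *)
Definition pt (d : nat) := {ffun 'I_d -> int}.
Definition zset (d : nat) := pt d -> Prop.

Definition zset_eq d (S T : zset d) := forall x, S x <-> T x.

Definition ell (R : realType) (h : R) (k : nat) : int :=
  Num.ceil ((k.-1)%:R *+ 2 / h).

(* Rotation + translation of Z^d: x |-> t + P x, where P is the signed
   permutation matrix (P x)_i = (-1)^(eps i) x_(s i); a rotation means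
   det P = +1, i.e. sign(s) * (-1)^#{i | eps i} = 1. *)
Definition rigid d (s : 'S_d) (eps : 'I_d -> bool) (t : pt d) (x : pt d) : pt d :=
  [ffun i => t i + (-1) ^+ eps i * x (s i)].

Definition proper_rot d (s : 'S_d) (eps : 'I_d -> bool) : bool :=
  odd_perm s == odd #|[set i | eps i]|.

Definition zimage d (f : pt d -> pt d) (T : zset d) : zset d :=
  fun y => exists x, T x /\ y = f x.

Definition phead d (x : pt d.+1) : int := x ord0.
Definition ptail d (x : pt d.+1) : pt d := [ffun i => x (lift ord0 i)].

(* Standard attachment shape in Z^(d+1) with maximal side L (side lengths are
   lattice lengths: a side of length m spans m+1 sites).  The quasi-cube
   [0, L-1] x [0, L]^d (one side L-1, the others L) is plus, and the
   d-dimensional configuration eta (living on the face [0,L]^d) is attached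
   on the layer {L} x Z^d adjacent to the face of size L^d. *)
Definition attach_shape d (L : int) (eta : zset d) : zset d.+1 :=
  fun x => ((0 <= phead x <= L - 1) /\ (forall i, 0 <= ptail x i <= L))
           \/ (phead x = L /\ eta (ptail x)).

Definition in_face d (L : int) (eta : zset d) : Prop :=
  forall y, eta y -> forall i, 0 <= y i <= L.

(* csaddle h d S : S is a candidate saddle in dimension d+1 *)
Fixpoint csaddle (R : realType) (h : R) (d : nat) : zset d.+1 -> Prop :=
  match d as n return zset n.+1 -> Prop with
  | 0 => fun S => exists a : pt 1, zset_eq S (fun x => x = a)
  | d'.+1 => fun S =>
      exists (eta : zset d'.+1),
        csaddle h eta /\ in_face (ell h d'.+2) eta /\
        exists (s : 'S_d'.+2) (eps : 'I_d'.+2 -> bool) (t : pt d'.+2),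
          proper_rot s eps /\
          zset_eq S (zimage (rigid s eps t) (attach_shape (ell h d'.+2) eta))
  end.

Definition candidate_saddle (R : realType) (h : R) (d : nat) : zset d -> Prop :=
  match d as n return zset n -> Prop with
  | 0 => fun _ => False
  | d'.+1 => @csaddle R h d'
  end.

(* The fixed cube [0, l]^d (side length l, i.e. l+1 sites per side) *)
Definition cube_pt (d l : nat) := {ffun 'I_d -> 'I_l.+1}.

Definition embed d l (A : {set cube_pt d l}) : zset d :=
  fun x => exists a, a \in A /\ x = [ffun i => ((a i : nat) : int)].

Definition N_saddles (R : realType) (h : R) (d l : nat) : nat :=
  #|[set A : {set cube_pt d l} | `[< candidate_saddle h (embed A) >] ]|.

(* Up to a rotation and a translation, the attachment shape of a candidate
   saddle in dimension n+1 is determined by an axis a, a side b of that axis and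
   a corner t: it is the box [t, t + L]^(n+1), L = ell_(n+1), minus the face
   x_a = t_a + (0 or L) selected by b, with a candidate saddle eta of dimension n
   attached on that face; every choice of (a, b) is realized by a proper
   rotation, flipping a second axis if needed.  Conversely (a, b, t, eta) is read
   off the set: t is its lowest corner, and since eta lies in a box of side
   ell_n <= L - 2 (ell_(k+1) >= ell_k + 2 because h < 1), it cannot fill a face,
   which locates the removed face.  Counting the admissible corners in the cube
   [0, l]^(n+1) gives N_(n+1)(l) = 2 (n+1) (l - L + 1)^(n+1) N_n(L), and the
   formula follows by induction from N_1(l) = l + 1. *)

From HB Require Import structures.
From mathcomp Require Import all_boot all_order all_algebra all_fingroup.
From mathcomp Require Import boolp reals.
From mathcomp Require Import zify ring lra.
Import Order.TTheory GRing.Theory Num.Theory.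
Local Open Scope ring_scope.
Set Implicit Arguments. Unset Strict Implicit. Unset Printing Implicit Defensive.

(** * Normal form of the attachment shape *)

(* [x |-> flip_shift L c + (-1)^c x] maps [0, L] onto itself. *)
Definition flip_shift (L : int) (c : bool) : int := if c then L else 0.

Definition attach_level (L : int) (b : bool) : int := if b then 0 else L.

Definition in_slab (L : int) (b : bool) (v : int) : bool :=
  if b then 1 <= v <= L else 0 <= v <= L - 1.

(* Every rotated and translated [attach_shape L eta] has this form. *)
Definition saddle_shape n (L : int) (a : 'I_n.+1) (b : bool) (t : pt n.+1)
    (eta : zset n) : zset n.+1 :=
  fun x => (forall j, 0 <= x (lift a j) - t (lift a j) <= L) /\
    (in_slab L b (x a - t a) \/
     (x a - t a = attach_level L b /\ eta [ffun j => x (lift a j) - t (lift a j)])).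

Definition signed_affine n (p : 'I_n -> 'I_n) (e : 'I_n -> bool) (u z : pt n) : pt n :=
  [ffun k => u k + (-1) ^+ e k * z (p k)].

Definition rigid_inv n (s : 'S_n) (eps : 'I_n -> bool) (t : pt n) : pt n -> pt n :=
  signed_affine (fun k => (s^-1)%g k) (fun k => eps ((s^-1)%g k))
    [ffun k => - ((-1) ^+ eps ((s^-1)%g k) * t ((s^-1)%g k))].

Definition pt0 n : pt n := [ffun => 0].

Lemma flip_shift_box (L : int) (c : bool) (v : int) : 0 <= L ->
  (0 <= flip_shift L c + (-1) ^+ c * v <= L) = (0 <= v <= L).
Proof. by rewrite /flip_shift; case: c => /= hL; apply/idP/idP; lia. Qed.

Lemma in_slab_flip (L : int) (b c : bool) (v : int) :
  in_slab L b (flip_shift L c + (-1) ^+ c * v) = in_slab L (b (+) c) v.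
Proof. by rewrite /flip_shift /in_slab; case: c; case: b => /=; apply/idP/idP; lia. Qed.

Lemma attach_level_flip (L : int) (b c : bool) (v : int) :
  flip_shift L c + (-1) ^+ c * v = attach_level L b <-> v = attach_level L (b (+) c).
Proof. by rewrite /flip_shift /attach_level; case: c; case: b => /=; split; lia. Qed.

Lemma in_slab_attach_level (L : int) (b : bool) :
  1 <= L -> in_slab L b (attach_level L b) = false.
Proof. by rewrite /in_slab /attach_level; case: b => /= hL; apply/negbTE; lia. Qed.

Lemma box_in_slab (L : int) (b : bool) (v : int) :
  0 <= v <= L -> v != attach_level L b -> in_slab L b v.
Proof. by rewrite /in_slab /attach_level; case: b => /=; lia. Qed.

Lemma zset_eq_sym d (S T : zset d) : zset_eq S T -> zset_eq T S.
Proof. by move=> ST x; split; move/ST. Qed.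

Lemma zset_eq_trans d (S T U : zset d) : zset_eq S T -> zset_eq T U -> zset_eq S U.
Proof. by move=> ST TU x; split; [move/ST/TU | move/TU/ST]. Qed.

Lemma zimage_eq n (f : pt n -> pt n) (T T' : zset n) :
  zset_eq T T' -> zset_eq (zimage f T) (zimage f T').
Proof. by move=> TT' z; split=> -[x [Tx ->]]; exists x; split=> //; apply/TT'. Qed.

Lemma saddle_shape_eq n (L : int) (a : 'I_n.+1) (b : bool) (t : pt n.+1)
    (eta eta' : zset n) :
  zset_eq eta eta' -> zset_eq (saddle_shape L a b t eta) (saddle_shape L a b t eta').
Proof.
move=> ee' x; split=> -[box slab]; split=> //.
  by case: slab => [|[lev eta_x]]; [left | right; split=> //; apply/ee'].
by case: slab => [|[lev eta_x]]; [left | right; split=> //; apply/ee'].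
Qed.

Lemma zimage_rigid n (s : 'S_n) (eps : 'I_n -> bool) (t : pt n) (T : zset n) :
  zset_eq (zimage (rigid s eps t) T) (fun z => T (rigid_inv s eps t z)).
Proof.
move=> z; split.
- case=> x [Tx ->]; congr T: Tx.
  apply/ffunP => k; rewrite /rigid_inv /signed_affine /rigid !ffunE permKV.
  by case: (eps _) => /=; ring.
- move=> Tz; exists (rigid_inv s eps t z); split=> //.
  apply/ffunP => i; rewrite /rigid /rigid_inv /signed_affine !ffunE permK.
  by case: (eps _) => /=; ring.
Qed.

Lemma attach_shape_eq n (L : int) (eta : zset n) : in_face L eta ->
  zset_eq (attach_shape L eta) (saddle_shape L ord0 false (pt0 n.+1) eta).
Proof.
move=> eta_face x.
have tailE : [ffun j => x (lift ord0 j) - pt0 n.+1 (lift ord0 j)] = ptail x.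
  by apply/ffunP => j; rewrite !ffunE subr0.
have ptailE j : ptail x j = x (lift ord0 j) - pt0 n.+1 (lift ord0 j).
  by rewrite !ffunE subr0.
rewrite /attach_shape /saddle_shape tailE /in_slab /attach_level /phead /= ffunE subr0.
split.
- case=> [[slab box] | [lev eta_x]].
  + by split; [move=> j; rewrite -ptailE | left].
  + by split; [move=> j; rewrite -ptailE; apply: eta_face eta_x j | right].
- case=> box [slab | lev]; [left | by right].
  by split=> // i; rewrite ptailE.
Qed.

Lemma in_face_preim n (L : int) (eta : zset n) (p : 'I_n -> 'I_n) (e : 'I_n -> bool) :
  0 <= L -> injective p -> in_face L eta ->
  in_face L (fun w => eta (signed_affine p e [ffun j => flip_shift L (e j)] w)).
Proof.
move=> hL injp eta_face w eta_w i.
have [k <-] : exists k, p k = i by exists (invF injp i); rewrite f_invF.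
by have := eta_face _ eta_w k; rewrite /signed_affine !ffunE flip_shift_box.
Qed.

Lemma signed_affine_flipK n (L : int) (e : 'I_n -> bool) :
  involutive (signed_affine id e [ffun j => flip_shift L (e j)]).
Proof.
by move=> w; apply/ffunP => j; rewrite /signed_affine !ffunE /flip_shift; case: (e j) => /=; ring.
Qed.

(* [p'] is the permutation induced by [p] on the coordinates other than [a]. *)
Lemma saddle_shape_preim n (L : int) (a : 'I_n.+1) (b : bool) (t : pt n.+1)
    (eta : zset n) (p : 'I_n.+1 -> 'I_n.+1) (e : 'I_n.+1 -> bool) (u t' : pt n.+1)
    (p' : 'I_n -> 'I_n) :
  0 <= L -> injective p' ->
  (forall j, p (lift a j) = lift (p a) (p' j)) ->
  (forall k, t' (p k) = (-1) ^+ e k * (flip_shift L (e k) - u k + t k)) ->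
  zset_eq (fun z => saddle_shape L a b t eta (signed_affine p e u z))
    (saddle_shape L (p a) (b (+) e a) t'
       (fun w => eta (signed_affine p' (fun j => e (lift a j))
                        [ffun j => flip_shift L (e (lift a j))] w))).
Proof.
move=> hL injp' pE t'E z.
have coordE k : signed_affine p e u z k - t k =
    flip_shift L (e k) + (-1) ^+ e k * (z (p k) - t' (p k)).
  by rewrite /signed_affine ffunE t'E /flip_shift; case: (e k) => /=; ring.
have faceE : [ffun j => signed_affine p e u z (lift a j) - t (lift a j)] =
   signed_affine p' (fun j => e (lift a j)) [ffun j => flip_shift L (e (lift a j))]
     [ffun j => z (lift (p a) j) - t' (lift (p a) j)].
  by apply/ffunP => j; rewrite [LHS]ffunE coordE pE /signed_affine !ffunE.
have boxE : (forall j, 0 <= signed_affine p e u z (lift a j) - t (lift a j) <= L) <->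
            (forall j, 0 <= z (lift (p a) j) - t' (lift (p a) j) <= L).
  split=> box j; last by rewrite coordE pE flip_shift_box.
  have [j0 <-] : exists j0, p' j0 = j by exists (invF injp' j); rewrite f_invF.
  by have := box j0; rewrite coordE pE flip_shift_box.
rewrite /saddle_shape faceE coordE in_slab_flip boxE attach_level_flip; tauto.
Qed.

Section ToFront.
Variables (n : nat) (a : 'I_n.+1).

Definition front_index (i : 'I_n.+1) : 'I_n.+1 :=
  if unlift a i is Some j then lift ord0 j else ord0.

Lemma front_index_inj : injective front_index.
Proof.
move=> i1 i2; rewrite /front_index.
by case: unliftP => [j1 ->|->]; case: unliftP => [j2 ->|->] // /lift_inj ->.
Qed.

Definition to_front : 'S_n.+1 := perm front_index_inj.

Lemma to_frontV_ord0 : (to_front^-1)%g ord0 = a.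
Proof.
have <- : to_front a = ord0 by rewrite permE /front_index unlift_none.
by rewrite permK.
Qed.

Lemma to_frontV_lift j : (to_front^-1)%g (lift ord0 j) = lift a j.
Proof.
have <- : to_front (lift a j) = lift ord0 j by rewrite permE /front_index liftK.
by rewrite permK.
Qed.

End ToFront.

Lemma card_two_flags (T : finType) (x y : T) (b c : bool) : x != y ->
  #|[set i | ((i == x) && b) || ((i == y) && c)]| = (b + c)%N.
Proof.
move=> xy; case: b; case: c => /=.
- rewrite (_ : [set i | _] = [set x; y]) ?cards2 ?xy //.
  by apply/setP => i; rewrite !inE !andbT.
- rewrite (_ : [set i | _] = [set x]) ?cards1 //.
  by apply/setP => i; rewrite !inE andbT andbF orbF.
- rewrite (_ : [set i | _] = [set y]) ?cards1 //.
  by apply/setP => i; rewrite !inE andbT andbF.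
- rewrite (_ : [set i | _] = set0) ?cards0 //.
  by apply/setP => i; rewrite !inE !andbF.
Qed.

Definition front_flips n (a : 'I_n.+2) (b c : bool) (i : 'I_n.+2) : bool :=
  if unlift a i is Some j then (j == ord0) && c else b.

(* Flipping the axis [a] by [b] is compensated, if needed, by flipping one
   further axis, so that the signed permutation is a rotation. *)
Lemma proper_to_front n (a : 'I_n.+2) (b : bool) :
  proper_rot (to_front a) (front_flips a b (odd_perm (to_front a) (+) b)).
Proof.
set c := odd_perm _ (+) b; rewrite /proper_rot.
have a_lift : a != lift a ord0 by rewrite neq_lift.
suff -> : [set i | front_flips a b c i] =
          [set i | ((i == a) && b) || ((i == lift a ord0) && c)].
  by rewrite card_two_flags // oddD /c {c}; case: (odd_perm _); case: b.
apply/setP => i; rewrite !inE /front_flips.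
case: unliftP => [j ->|->]; last by rewrite eqxx (negbTE a_lift) orbF.
by rewrite [lift a j == a]eq_sym (negbTE (neq_lift a j)) (inj_eq (@lift_inj _ a)).
Qed.

(** * Recovering the data of a shape *)

Definition splice n (t : pt n.+1) (a : 'I_n.+1) (ya : int) (w : pt n) : pt n.+1 :=
  [ffun i => t i + (if unlift a i is Some j then w j else ya)].

Lemma splice_axis n (t : pt n.+1) (a : 'I_n.+1) (ya : int) (w : pt n) :
  splice t a ya w a - t a = ya.
Proof. by rewrite /splice ffunE unlift_none; lia. Qed.

Lemma splice_lift n (t : pt n.+1) (a : 'I_n.+1) (ya : int) (w : pt n) j :
  splice t a ya w (lift a j) - t (lift a j) = w j.
Proof. by rewrite /splice ffunE liftK; lia. Qed.

Lemma splice_box n (L : int) (t : pt n.+1) (a : 'I_n.+1) (ya : int) (w : pt n) :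
  0 <= ya <= L -> (forall k, 0 <= w k <= L) ->
  forall i, 0 <= splice t a ya w i - t i <= L.
Proof.
by move=> ya_box w_box i; case: (unliftP a i) => [j ->|->];
  rewrite ?splice_lift ?splice_axis.
Qed.

Lemma saddle_shape_splice n (L : int) (a : 'I_n.+1) (b : bool) (t : pt n.+1)
    (eta : zset n) (ya : int) (w : pt n) :
  saddle_shape L a b t eta (splice t a ya w) <->
  (forall j, 0 <= w j <= L) /\ (in_slab L b ya \/ (ya = attach_level L b /\ eta w)).
Proof.
have faceE : [ffun j => splice t a ya w (lift a j) - t (lift a j)] = w.
  by apply/ffunP => j; rewrite ffunE splice_lift.
rewrite /saddle_shape faceE splice_axis.
by split=> -[box slab]; split=> // j; [move: (box j) | ]; rewrite splice_lift.
Qed.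

Lemma saddle_shape_box n (L : int) (a : 'I_n.+1) (b : bool) (t : pt n.+1)
    (eta : zset n) z :
  0 <= L -> saddle_shape L a b t eta z -> forall i, 0 <= z i - t i <= L.
Proof.
move=> hL [box slab] i; case: (unliftP a i) => [j ->|->]; first exact: box.
by case: slab => [|[-> _]]; rewrite /in_slab /attach_level; case: b => /=; lia.
Qed.

Lemma saddle_shape_attach_level n (L : int) (a : 'I_n.+1) (b : bool) (t : pt n.+1)
    (eta : zset n) (w : pt n) :
  1 <= L -> saddle_shape L a b t eta (splice t a (attach_level L b) w) -> eta w.
Proof.
by move=> hL /saddle_shape_splice[_ [|[_ //]]]; rewrite in_slab_attach_level.
Qed.

Lemma saddle_shape_extreme n (L : int) (a : 'I_n.+1) (b : bool) (t : pt n.+1)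
    (eta : zset n) :
  1 <= L -> (exists w, eta w) -> in_face L eta -> forall i (v : int), v = 0 \/ v = L ->
  exists z, saddle_shape L a b t eta z /\ z i - t i = v.
Proof.
move=> hL [w0 eta_w0] eta_face i v v0L.
have pt0_box : forall k, 0 <= pt0 n k <= L by move=> k; rewrite ffunE; lia.
case: (unliftP a i) => [j ->|->].
  exists (splice t a (if b then L else 0) [ffun k => if k == j then v else 0]).
  rewrite splice_lift ffunE eqxx; split=> //; apply/saddle_shape_splice; split.
    by move=> k; rewrite ffunE; case: (k == j); lia.
  by left; rewrite /in_slab; case: (b) => /=; lia.
have attached ya : ya = attach_level L b ->
    saddle_shape L a b t eta (splice t a ya w0).
  by move=> ->; apply/saddle_shape_splice; split; [exact: eta_face | right].
have slab ya : in_slab L b ya -> saddle_shape L a b t eta (splice t a ya (pt0 n)).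
  by move=> slab_ya; apply/saddle_shape_splice; split; [exact: pt0_box | left].
have [v_lev|v_lev] := eqVneq v (attach_level L b).
  by exists (splice t a v w0); rewrite splice_axis; split=> //; apply: attached.
exists (splice t a v (pt0 n)); rewrite splice_axis; split=> //.
by apply/slab/box_in_slab => //; lia.
Qed.

Lemma saddle_shape_corner_unique n (L : int) (a a' : 'I_n.+1) (b b' : bool)
    (t t' : pt n.+1) (eta eta' : zset n) :
  1 <= L -> (exists w, eta w) -> (exists w, eta' w) ->
  in_face L eta -> in_face L eta' ->
  zset_eq (saddle_shape L a b t eta) (saddle_shape L a' b' t' eta') -> t = t'.
Proof.
move=> hL ne ne' face face' ee'; apply/ffunP => i.
have [z [Sz zi]] := saddle_shape_extreme a b t hL ne face i (or_introl erefl).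
have [z' [Sz' z'i]] := saddle_shape_extreme a' b' t' hL ne' face' i (or_introl erefl).
have hL0 : 0 <= L by lia.
have := saddle_shape_box hL0 (proj1 (ee' z) Sz) i.
have := saddle_shape_box hL0 (proj2 (ee' z') Sz') i.
move: zi z'i => /eqP; rewrite subr_eq0 => /eqP -> /eqP; rewrite subr_eq0 => /eqP ->.
rewrite !subr_ge0 => /andP[ti _] /andP[t'i _].
by apply/eqP; rewrite eq_le ti t'i.
Qed.

Lemma avoid_interval (m l L c : int) : 0 <= l -> l + 2 <= L -> c = 0 \/ c = L ->
  exists v, 0 <= v <= L /\ v != c /\ (v < m \/ m + l < v).
Proof.
move=> hl hL hc.
have [m_gt1|m_le1] := ltrP 1 m; first by exists 1; case: hc => ->; lia.
have [m_lt1|m_ge1] := ltrP m 1; first by exists (L - 1); case: hc => ->; lia.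
by case: hc => ->; [exists L | exists 0]; lia.
Qed.

(* The attached configuration has width at most [l < L - 1] in every direction,
   so it cannot fill a face of the box: there is a point of the face of [a, b]
   missing from the shape but lying in the quasi-cube of [a', b']. *)
Lemma saddle_shape_axis_unique n (L l : int) (a a' : 'I_n.+2) (b b' : bool)
    (t : pt n.+2) (eta eta' : zset n.+1) :
  0 <= l -> l + 2 <= L ->
  (forall j, exists m, forall w, eta w -> m <= w j <= m + l) ->
  zset_eq (saddle_shape L a b t eta) (saddle_shape L a' b' t eta') -> a = a' /\ b = b'.
Proof.
move=> hl hlL eta_width ee'.
have [/andP[/eqP-> /eqP->] //|ab] := boolP ((a == a') && (b == b')).
exfalso; pose j0 := odflt ord0 (unlift a a').
have [m eta_m] := eta_width j0.
have lev' : attach_level L b' = 0 \/ attach_level L b' = L by case: (b'); [left | right].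
have [v [v_box [v_lev v_out]]] := avoid_interval m hl hlL lev'.
pose w := [ffun k => if k == j0 then v else 0].
have w_box k : 0 <= w k <= L by rewrite ffunE; case: (k == j0); lia.
have lev_box : 0 <= attach_level L b <= L by rewrite /attach_level; case: (b); lia.
have x_box := splice_box t a lev_box w_box.
have hL1 : 1 <= L by lia.
suff /ee' /(saddle_shape_attach_level hL1) /eta_m :
    saddle_shape L a' b' t eta' (splice t a (attach_level L b) w).
  by rewrite ffunE eqxx; lia.
split=> [j|]; first exact: x_box.
left; apply: box_in_slab; first exact: x_box.
have [aa'|aa'] := eqVneq a a'.
  subst a'; rewrite splice_axis; move: ab; rewrite eqxx /attach_level.
  by case: (b); case: (b') => //= _; lia.
have [j1 a'E j1E] := unlift_some aa'.
by rewrite a'E splice_lift ffunE /j0 j1E eqxx.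
Qed.

Lemma saddle_shape_inj n (L l : int) (a a' : 'I_n.+2) (b b' : bool) (t t' : pt n.+2)
    (eta eta' : zset n.+1) :
  0 <= l -> l + 2 <= L ->
  (exists w, eta w) -> (exists w, eta' w) -> in_face L eta -> in_face L eta' ->
  (forall j, exists m, forall w, eta w -> m <= w j <= m + l) ->
  zset_eq (saddle_shape L a b t eta) (saddle_shape L a' b' t' eta') ->
  [/\ a = a', b = b', t = t' & zset_eq eta eta'].
Proof.
move=> hl hlL ne ne' face face' eta_width ee'.
have hL : 1 <= L by lia.
have tt' := saddle_shape_corner_unique hL ne ne' face face' ee'; subst t'.
have [aa' bb'] := saddle_shape_axis_unique hl hlL eta_width ee'; subst a' b'.
split=> // w; split=> eta_w; apply: (saddle_shape_attach_level hL); apply/ee';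
  apply/saddle_shape_splice; split; try by right.
- exact: face eta_w.
- exact: face' eta_w.
Qed.

(** * Normal form of candidate saddles *)

Lemma ell_ge0 (R : realType) (h : R) k : 0 <= h -> 0 <= ell h k.
Proof.
move=> h0; rewrite /ell ceil_ge0; apply: (@lt_le_trans _ _ 0); first by rewrite oppr_lt0.
by apply: divr_ge0 => //; rewrite mulrn_wge0.
Qed.

Section NormalForm.
Variables (R : realType) (h : R).
Hypothesis h_ge0 : 0 <= h.

(* Same recursion as [csaddle], with each rotated attachment shape replaced by
   its normal form [saddle_shape]. *)
Fixpoint normal_saddle (n : nat) : zset n.+1 -> Prop :=
  match n as m return zset m.+1 -> Prop with
  | 0 => fun S => exists a : pt 1, zset_eq S (fun x => x = a)
  | m.+1 => fun S => exists (a : 'I_m.+2) (b : bool) (t : pt m.+2) (eta : zset m.+1),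
      normal_saddle eta /\ in_face (ell h m.+2) eta /\
      zset_eq S (saddle_shape (ell h m.+2) a b t eta)
  end.

Lemma normal_saddle_eq n (S T : zset n.+1) :
  normal_saddle S -> zset_eq S T -> normal_saddle T.
Proof.
case: n S T => [|n] S T /=.
  by move=> [a Sa] ST; exists a; apply: zset_eq_trans (zset_eq_sym ST) Sa.
move=> [a [b [t [eta [eta_normal [eta_face SE]]]]]] ST.
by exists a, b, t, eta; do 2!split=> //; apply: zset_eq_trans (zset_eq_sym ST) SE.
Qed.

Lemma normal_saddle_preim n (S : zset n.+1) (p : 'I_n.+1 -> 'I_n.+1)
    (e : 'I_n.+1 -> bool) (u : pt n.+1) :
  injective p -> normal_saddle S -> normal_saddle (fun z => S (signed_affine p e u z)).
Proof.
elim: n S p e u => [|n IH] S p e u injp /=.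
  move=> [a Sa].
  exists [ffun i => (-1) ^+ e (invF injp i) * (a (invF injp i) - u (invF injp i))].
  move=> z; rewrite Sa; split=> [<-|->].
  - apply/ffunP => i; have [k <-] : exists k, p k = i by exists (invF injp i); rewrite f_invF.
    by rewrite ffunE invF_f /signed_affine ffunE; case: (e k) => /=; ring.
  - by apply/ffunP => k; rewrite /signed_affine !ffunE invF_f; case: (e k) => /=; ring.
move=> [a [b [t [eta [eta_normal [eta_face SE]]]]]].
have hL := ell_ge0 n.+2 h_ge0.
pose p' j := odflt j (unlift (p a) (p (lift a j))).
have pE j : p (lift a j) = lift (p a) (p' j).
  have pa_pl : p a != p (lift a j) by rewrite (inj_eq injp) neq_lift.
  by case: (unlift_some pa_pl) => j0 plE unliftE; rewrite /p' unliftE.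
have injp' : injective p'.
  by move=> j1 j2 pj12; apply: (@lift_inj _ a); apply: injp; rewrite !pE pj12.
pose t' := [ffun i => (-1) ^+ e (invF injp i) *
  (flip_shift (ell h n.+2) (e (invF injp i)) - u (invF injp i) + t (invF injp i))].
pose flip' := signed_affine p' (fun j => e (lift a j))
  [ffun j => flip_shift (ell h n.+2) (e (lift a j))].
exists (p a), (b (+) e a), t', (fun w => eta (flip' w)).
split; first exact: IH.
split; first exact: in_face_preim.
apply: zset_eq_trans; last first.
  by apply: (saddle_shape_preim _ _ hL injp' pE) => k; rewrite /t' ffunE invF_f.
by move=> z; apply: SE.
Qed.

Lemma csaddle_normal n (S : zset n.+1) : csaddle h S -> normal_saddle S.
Proof.
elim: n S => [|n IH] S //=.
move=> [eta [eta_saddle [eta_face [s [eps [t [_ SE]]]]]]].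
have attach_normal : normal_saddle (attach_shape (ell h n.+2) eta).
  exists ord0, false, (pt0 n.+2), eta; split; first exact: IH.
  by split=> //; apply: attach_shape_eq.
apply: normal_saddle_eq (normal_saddle_preim _ _ (@perm_inj _ (s^-1)%g) attach_normal) _.
by apply: zset_eq_sym; apply: zset_eq_trans SE (zimage_rigid _ _ _ _).
Qed.

Lemma normal_csaddle n (S : zset n.+1) : normal_saddle S -> csaddle h S.
Proof.
elim: n S => [|n IH] S //=.
move=> [a [b [t [eta [eta_normal [eta_face SE]]]]]].
set L := ell h n.+2; have hL : 0 <= L := ell_ge0 _ h_ge0.
pose s := to_front a; pose c := odd_perm s (+) b; pose eps := front_flips a b c.
have epsa : eps a = b by rewrite /eps /front_flips unlift_none.
have epsl j : eps (lift a j) = (j == ord0) && c by rewrite /eps /front_flips liftK.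
pose e0 (j : 'I_n.+1) := (j == ord0) && c.
pose flip0 := signed_affine id e0 [ffun j => flip_shift L (e0 j)].
pose eta' w := eta (flip0 w).
have eta'_face : in_face L eta' by apply: in_face_preim.
pose t0 := [ffun i => t i - (-1) ^+ eps i * flip_shift L (eps i)].
exists eta'; split; first exact/IH/normal_saddle_preim.
split=> //; exists s, eps, t0; split; first exact: proper_to_front.
have rigidE : zset_eq (fun z => saddle_shape L ord0 false (pt0 n.+2) eta'
    (rigid_inv s eps t0 z)) (saddle_shape L a b t eta).
  have sV_lift j : (s^-1)%g (lift ord0 j) = lift (s^-1 ord0)%g j.
    by rewrite !to_frontV_lift to_frontV_ord0.
  apply: zset_eq_trans (@saddle_shape_preim n.+1 L ord0 false (pt0 n.+2) eta'
    (fun k => (s^-1)%g k) (fun k => eps ((s^-1)%g k))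
    [ffun k => - ((-1) ^+ eps ((s^-1)%g k) * t0 ((s^-1)%g k))]
    t id hL (@inj_id _) sV_lift _) _.
    by move=> k; rewrite /t0 /pt0 !ffunE; case: (eps _) => /=; ring.
  rewrite to_frontV_ord0 epsa; apply: saddle_shape_eq => w; rewrite /eta'.
  suff -> : signed_affine id (fun j => eps ((s^-1)%g (lift ord0 j)))
      [ffun j => flip_shift L (eps ((s^-1)%g (lift ord0 j)))] w = flip0 w.
    by rewrite /flip0 signed_affine_flipK.
  by apply/ffunP => j; rewrite /signed_affine !ffunE to_frontV_lift epsl.
apply: zset_eq_trans SE _.
apply: zset_eq_trans (zimage_eq _ (zset_eq_sym (attach_shape_eq eta'_face))).
exact: zset_eq_trans (zset_eq_sym rigidE) (zset_eq_sym (zimage_rigid _ _ _ _)).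
Qed.

End NormalForm.

(** * Counting *)

Lemma ell1 (R : realType) (h : R) : ell h 1 = 0.
Proof. by rewrite /ell /= mul0rn mul0r ceil0. Qed.

(* Since [h < 1], consecutive values of [2 k / h] differ by more than [2]. *)
Lemma ell_gap (R : realType) (h : R) (k : nat) : 0 < h -> h < 1 ->
  ell h k.+1 + 2 <= ell h k.+2.
Proof.
move=> h_gt0 h_lt1; rewrite /ell /=.
set x := k%:R *+ 2 / h; set y := k.+1%:R *+ 2 / h.
have xy : x + 2 <= y.
  have -> : y = x + 2 / h by rewrite /x /y -mulrDl -natr1 mulrnDl.
  by rewrite lerD2l ler_pdivlMr //; lra.
suff : Num.ceil x <= Num.ceil y - 2 by lia.
rewrite ceil_le_int rmorphB /=; apply: (@le_trans _ _ (y - 2)); first lra.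
by rewrite lerD2r ceil_ge.
Qed.

Definition cube_toZ d l (x : cube_pt d l) : pt d := [ffun i => ((x i : nat) : int)].

Lemma cube_toZ_inj d l : injective (@cube_toZ d l).
Proof.
move=> x y xy; apply/ffunP => i; apply: val_inj.
by have := congr1 (fun f : pt d => f i) xy; rewrite !ffunE => -[].
Qed.

Lemma cube_toZ_onto d l (z : pt d) :
  (forall i, 0 <= z i <= l%:Z) -> exists x : cube_pt d l, cube_toZ x = z.
Proof.
move=> z_box; exists [ffun i => inord (absz (z i))].
apply/ffunP => i; have /andP[zi_ge0 zi_le] := z_box i.
rewrite !ffunE inordK; first by rewrite gez0_abs.
by rewrite -ltz_nat gez0_abs //; lia.
Qed.

Lemma embed_cube_toZ d l (A : {set cube_pt d l}) x : embed A (cube_toZ x) <-> x \in A.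
Proof. by split=> [[y [Ay /cube_toZ_inj ->]] | Ax] //; exists x. Qed.

Lemma in_face_embed d l (B : {set cube_pt d l}) : in_face l%:Z (embed B).
Proof. by move=> y [c [_ ->]] i; rewrite ffunE; have := ltn_ord (c i); lia. Qed.

Lemma embed_cube_preim d l (eta : zset d) : in_face l%:Z eta ->
  zset_eq (embed [set y : cube_pt d l | `[< eta (cube_toZ y) >]]) eta.
Proof.
move=> eta_face w; split=> [[y [/[!inE] /asboolP eta_y ->]] // | eta_w].
have [y yw] := cube_toZ_onto (eta_face w eta_w).
by exists y; split=> //; rewrite inE; apply/asboolP; rewrite yw.
Qed.

Lemma embed_eq d l (A B : {set cube_pt d l}) : zset_eq (embed A) (embed B) -> A = B.
Proof. by move=> AB; apply/setP => y; apply/idP/idP => /embed_cube_toZ/AB/embed_cube_toZ. Qed.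

(* Both extreme values [t i] and [t i + L] of each coordinate are attained. *)
Lemma saddle_shape_corner_in_cube n (L l : nat) (A : {set cube_pt n.+1 l})
    (a : 'I_n.+1) (b : bool) (t : pt n.+1) (eta : zset n) :
  (1 <= L)%N -> (exists w, eta w) -> in_face L%:Z eta ->
  zset_eq (embed A) (saddle_shape L%:Z a b t eta) ->
  forall i, 0 <= t i <= (l - L)%N%:Z.
Proof.
move=> hL ne eta_face AE i.
have hL' : 1 <= L%:Z by lia.
have [z1 [S1 z1i]] := saddle_shape_extreme a b t hL' ne eta_face i (or_introl erefl).
have [z2 [S2 z2i]] := saddle_shape_extreme a b t hL' ne eta_face i (or_intror erefl).
have [c1 [_ c1E]] := proj2 (AE z1) S1; have [c2 [_ c2E]] := proj2 (AE z2) S2.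
move: z1i z2i; rewrite c1E c2E !ffunE.
by have := ltn_ord (c1 i); have := ltn_ord (c2 i); lia.
Qed.

Definition shape_set n (L l : nat)
    (x : 'I_n.+2 * bool * cube_pt n.+2 (l - L) * {set cube_pt n.+1 L}) :
    {set cube_pt n.+2 l} :=
  [set z | `[< saddle_shape L%:Z x.1.1.1 x.1.1.2 (cube_toZ x.1.2) (embed x.2) (cube_toZ z) >] ].

Lemma embed_shape_set n (L l : nat) x : (L <= l)%N ->
  zset_eq (embed (@shape_set n L l x))
    (saddle_shape L%:Z x.1.1.1 x.1.1.2 (cube_toZ x.1.2) (embed x.2)).
Proof.
move=> hLl z; split=> [[c [/[!inE] /asboolP Sc ->]] // | Sz].
have [c cz] : exists c : cube_pt n.+2 l, cube_toZ c = z.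
  apply: cube_toZ_onto => i.
  have := saddle_shape_box (_ : 0 <= L%:Z) Sz i; rewrite /cube_toZ ffunE.
  by have := ltn_ord (x.1.2 i); lia.
by exists c; split=> //; rewrite inE; apply/asboolP; rewrite cz.
Qed.

Section Counting.
Variables (R : realType) (h : R).
Hypotheses (h_gt0 : 0 < h) (h_lt1 : h < 1).
Let h_ge0 : 0 <= h := ltW h_gt0.

Lemma ell_ge1 n : 1 <= ell h n.+2.
Proof. by have := ell_gap n h_gt0 h_lt1; have := ell_ge0 n.+1 h_ge0; lia. Qed.

Lemma normal_saddle_nonempty n (S : zset n.+1) : normal_saddle h S -> exists x, S x.
Proof.
case: n S => [|n] S /=; first by move=> [a Sa]; exists a; apply/Sa.
move=> [a [b [t [eta [_ [_ SE]]]]]]; have L1 := ell_ge1 n.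
exists (splice t a (if b then ell h n.+2 else 0) (pt0 n.+1)); apply/SE/saddle_shape_splice.
split; first by move=> j; rewrite ffunE; lia.
by left; rewrite /in_slab; case: (b) => /=; lia.
Qed.

Lemma normal_saddle_width n (S : zset n.+1) : normal_saddle h S ->
  forall j, exists m, forall w, S w -> m <= w j <= m + ell h n.+1.
Proof.
case: n S => [|n] S /=.
  by move=> [a Sa] j; exists (a j) => w /Sa ->; rewrite ell1; lia.
move=> [a [b [t [eta [_ [_ SE]]]]]] j; exists (t j) => w /SE Sw.
by have := saddle_shape_box (ell_ge0 n.+2 h_ge0) Sw j; lia.
Qed.

Definition normal_saddles_in n l : {set {set cube_pt n.+1 l}} :=
  [set A | `[< normal_saddle h (embed A) >] ].

Lemma N_saddles_normal n l : N_saddles h n.+1 l = #|normal_saddles_in n l|.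
Proof.
apply: eq_card => A; rewrite !inE; apply: asbool_equiv_eq.
by split; [exact: csaddle_normal | exact: normal_csaddle].
Qed.

Lemma card_normal_saddles_in0 l : #|normal_saddles_in 0 l| = l.+1.
Proof.
have -> : normal_saddles_in 0 l = [set [set x] | x : cube_pt 1 l].
  apply/setP => A; rewrite inE; apply/asboolP/imsetP => [[a Aa] | [x _ ->]].
  - have [x [Ax ax]] : embed A a by apply/Aa.
    exists x => //; apply/setP => y; rewrite inE; apply/idP/eqP => [Ay|-> //].
    by apply: cube_toZ_inj; have /Aa -> := proj2 (embed_cube_toZ A y) Ay.
  - exists (cube_toZ x) => z; split=> [[c [/set1P -> ->]] // | ->].
    by apply/embed_cube_toZ; rewrite inE.
by rewrite card_imset ?card_ffun ?card_ord ?expn1 //; exact: set1_inj.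
Qed.

Section Step.
Variables (n L l : nat).
Hypotheses (hLe : ell h n.+2 = L%:Z) (hLl : (L <= l)%N).

Let shape_data : {set 'I_n.+2 * bool * cube_pt n.+2 (l - L) * {set cube_pt n.+1 L}} :=
  setX (setX (setX setT setT) setT) (normal_saddles_in n L).

Lemma normal_saddles_in_image :
  normal_saddles_in n.+1 l = (@shape_set n L l) @: shape_data.
Proof.
apply/setP => A; rewrite inE; apply/asboolP/imsetP.
- move=> /= [a [b [t [eta [eta_normal [eta_face AE]]]]]]; rewrite hLe in eta_face AE.
  have L1 : (1 <= L)%N by rewrite -lez_nat -hLe ell_ge1.
  have [tc tcE] := cube_toZ_onto (saddle_shape_corner_in_cube
    L1 (normal_saddle_nonempty eta_normal) eta_face AE).
  have etaE := embed_cube_preim eta_face.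
  exists (a, b, tc, [set y | `[< eta (cube_toZ y) >] ]).
    by rewrite !inE /=; apply/asboolP; apply: normal_saddle_eq eta_normal (zset_eq_sym etaE).
  apply/embed_eq; apply: zset_eq_trans AE _; apply: zset_eq_sym.
  by apply: zset_eq_trans (embed_shape_set _ hLl) _; rewrite /= tcE; apply: saddle_shape_eq.
- move=> [[[[a b] tc] B]]; rewrite !inE /= => /asboolP B_normal ->.
  exists a, b, (cube_toZ tc), (embed B); rewrite hLe; split=> //; split.
    exact: in_face_embed.
  exact: embed_shape_set.
Qed.

Lemma shape_set_inj : {in shape_data &, injective (@shape_set n L l)}.
Proof.
move=> [[[a1 b1] t1] B1] [[[a2 b2] t2] B2]; rewrite !inE /= => /asboolP B1_normal.
move=> /asboolP B2_normal E12.
have E : zset_eq (saddle_shape L%:Z a1 b1 (cube_toZ t1) (embed B1))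
                 (saddle_shape L%:Z a2 b2 (cube_toZ t2) (embed B2)).
  apply: zset_eq_trans (zset_eq_sym (embed_shape_set (a1, b1, t1, B1) hLl)) _.
  by rewrite E12; apply: embed_shape_set.
have gap : ell h n.+1 + 2 <= L%:Z by rewrite -hLe ell_gap.
have [-> -> /cube_toZ_inj -> /embed_eq ->] := saddle_shape_inj (ell_ge0 n.+1 h_ge0) gap
  (normal_saddle_nonempty B1_normal) (normal_saddle_nonempty B2_normal)
  (@in_face_embed _ _ B1) (@in_face_embed _ _ B2) (normal_saddle_width B1_normal) E.
by [].
Qed.

Lemma card_normal_saddles_inS :
  #|normal_saddles_in n.+1 l| = (n.+2 * 2 * (l - L).+1 ^ n.+2 * #|normal_saddles_in n L|)%N.
Proof.
rewrite normal_saddles_in_image (card_in_imset shape_set_inj).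
by rewrite !cardsX !cardsT card_ord card_bool card_ffun !card_ord.
Qed.

End Step.

Lemma card_normal_saddles_in n l : ell h n.+1 <= l%:Z ->
  (#|normal_saddles_in n l|)%:Z = 2 ^+ n * (n.+1`!)%:Z * (l%:Z - ell h n.+1 + 1) ^+ n.+1 *
    \prod_(1 <= k < n.+1) (ell h k.+1 - ell h k + 1) ^+ k.
Proof.
elim: n l => [|n IH] l hl.
  rewrite card_normal_saddles_in0 ell1 big_geq // expr0 expr1 mul1r mulr1 /=.
  by rewrite (_ : (1`!)%:Z = 1) //; lia.
have [L hLe] : exists L : nat, ell h n.+2 = L%:Z.
  by exists (absz (ell h n.+2)); rewrite gez0_abs ?ell_ge0.
have hLl : (L <= l)%N by rewrite -lez_nat -hLe.
have gap := ell_gap n h_gt0 h_lt1.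
rewrite (card_normal_saddles_inS hLe hLl) -[LHS]natz natrM natrM natrM natrX !natz IH -?hLe; last lia.
rewrite (@big_nat_recr _ _ _ n.+1 1) //= [in RHS]factS [in RHS]PoszM.
have -> : ((l - L).+1 : int) = l%:Z - ell h n.+2 + 1 by rewrite hLe; lia.
by rewrite !exprS; ring.
Qed.

End Counting.

Theorem lemma5p6 (R : realType) (h : R) (d l : nat)
    (hd : (1 <= d)%N) (h0 : 0 < h) (h1 : h < 1)
    (hint : forall k : nat, (1 <= k <= d.-1)%N -> ~ (k%:R *+ 2 / h \is a Num.int))
    (hl : ell h d <= l%:Z) :
  (N_saddles h d l)%:Z =
    2 ^+ d.-1 * (d`!)%:Z * (l%:Z - ell h d + 1) ^+ d *
    \prod_(1 <= k < d) (ell h k.+1 - ell h k + 1) ^+ k.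
Proof.
case: d hd hint hl => [//|n] _ _ hl.
by rewrite N_saddles_normal //; apply: card_normal_saddles_in.
Qed.
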